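(* In every complete lattice $\mathbf L$, the set $\Gamma$ of all non-generators is closed under binary meets and binary joins: if $a,b\in\Gamma$ then $a\wedge b\in\Gamma$ and $a\vee b\in\Gamma$.
   Context: A complete sublattice of a complete lattice $\mathbf L$ is a subset closed under arbitrary meets and joins computed in $L$ (including those of the empty set). For $X\subseteq L$, $\langle X\rangle$ is the intersection of all complete sublattices containing $X$, and $\langle X,a\rangle=\langle X\cup\{a\}\rangle$. An element $a$ is a non-generator if for every $X\subseteq L$, $\langle X,a\rangle=L$ implies $\langle X\rangle=L$. *)

From HB Require Import structures.
From mathcomp Require Import all_boot all_order.
Set Implicit Arguments. Unset Strict Implicit. Unset Printing Implicit Defensive.
Import Order.TTheory.
Local Open Scope order_scope.

Section CompleteLattice.
Context {d : Order.disp_t} {T : latticeType d}.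

Definition is_ub (X : T -> Prop) (u : T) : Prop := forall x, X x -> x <= u.
Definition is_lb (X : T -> Prop) (l : T) : Prop := forall x, X x -> l <= x.
Definition is_lub (X : T -> Prop) (u : T) : Prop :=
  is_ub X u /\ forall v, is_ub X v -> u <= v.
Definition is_glb (X : T -> Prop) (l : T) : Prop :=
  is_lb X l /\ forall v, is_lb X v -> v <= l.

Definition complete_lattice : Prop :=
  forall X : T -> Prop, (exists u, is_lub X u) /\ (exists l, is_glb X l).

Definition complete_sublattice (S : T -> Prop) : Prop :=
  forall X : T -> Prop, (forall x, X x -> S x) ->
    (forall u, is_lub X u -> S u) /\ (forall l, is_glb X l -> S l).

Definition generated (X : T -> Prop) : T -> Prop :=
  fun y => forall S, complete_sublattice S -> (forall x, X x -> S x) -> S y.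

Definition generates (X : T -> Prop) : Prop := forall y, generated X y.

Definition non_generator (a : T) : Prop :=
  forall X : T -> Prop, generates (fun x => X x \/ x = a) -> generates X.

End CompleteLattice.

(* A complete sublattice containing a and b contains a `&` b and a `|` b,
   the meet and join of {a, b}.  Hence if <X, a `&` b> = L then already
   <X, a, b> = L, and discarding the non-generators b and then a gives
   <X> = L; likewise for a `|` b. *)
From HB Require Import structures.
From mathcomp Require Import all_boot all_order.
Set Implicit Arguments. Unset Strict Implicit. Unset Printing Implicit Defensive.
Import Order.TTheory.
Local Open Scope order_scope.

Section NonGenerators.
Context {d : Order.disp_t} {T : latticeType d}.
Implicit Types (a b c : T) (S : T -> Prop).

Definition pair_set a b : T -> Prop := fun x => x = a \/ x = b.

Lemma is_glb_meet a b : is_glb (pair_set a b) (a `&` b).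
Proof.
split=> [x [->|->]|v lbv]; first exact: leIl; first exact: leIr.
by rewrite lexI (lbv a) ?(lbv b) //; [right | left].
Qed.

Lemma is_lub_join a b : is_lub (pair_set a b) (a `|` b).
Proof.
split=> [x [->|->]|v ubv]; first exact: leUl; first exact: leUr.
by rewrite leUx (ubv a) ?(ubv b) //; [right | left].
Qed.

Lemma complete_sublatticeI S a b :
  complete_sublattice S -> S a -> S b -> S (a `&` b).
Proof.
move=> hS Sa Sb; have sabS x : pair_set a b x -> S x by case=> ->.
by have [_] := hS _ sabS; apply; exact: is_glb_meet.
Qed.

Lemma complete_sublatticeU S a b :
  complete_sublattice S -> S a -> S b -> S (a `|` b).
Proof.
move=> hS Sa Sb; have sabS x : pair_set a b x -> S x by case=> ->.
by have [+ _] := hS _ sabS; apply; exact: is_lub_join.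
Qed.

Lemma generated_meet a b : generated (pair_set a b) (a `&` b).
Proof.
by move=> S hS sabS; apply: complete_sublatticeI => //; apply: sabS; [left|right].
Qed.

Lemma generated_join a b : generated (pair_set a b) (a `|` b).
Proof.
by move=> S hS sabS; apply: complete_sublatticeU => //; apply: sabS; [left|right].
Qed.

Lemma non_generator_generated a b c : generated (pair_set a b) c ->
  non_generator a -> non_generator b -> non_generator c.
Proof.
move=> gen_c nga ngb X genXc; apply: nga; apply: ngb => y S hS sXabS.
apply: genXc => // x [Xx|->]; first by apply: sXabS; left; left.
by apply: gen_c => // z [->|->]; apply: sXabS; [left; right | right].
Qed.

End NonGenerators.

Theorem mainTheorem5 (d : Order.disp_t) (T : latticeType d)
  (hT : @complete_lattice d T) (a b : T) :
  non_generator a -> non_generator b ->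
  non_generator (a `&` b) /\ non_generator (a `|` b).
Proof.
move=> nga ngb; split; apply: (non_generator_generated _ nga ngb).
- exact: generated_meet.
- exact: generated_join.
Qed.
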